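(* Let $n\ge2$, $k\ge1$ be integers, $p\in(0,1/2]$ with $k\le np/2-1$, $\pi$ a probability vector on $[k]$, $i\in[k]$, and $j$ an integer with $1\le j\le np/2-k$. Then $$\Big|\beta_1(j,i)-\frac{\pi[i]}{p}\Big|=O\Big(\frac{e^{-\Omega(np)}}{p}\Big),\qquad \big|\beta_0(j,i)-(1-\pi[i])\big|=O\big(p\,e^{-\Omega(np)}\big),$$ where $O(\cdot),\Omega(\cdot)$ hide universal constants. Consequently, if $np=\Omega\big(\log\max_{i'\in[k]}\frac{1}{\pi[i']}\big)$ with a sufficiently large universal constant hidden in the $\Omega$, then $\beta_1(j,i)\ge\frac{\pi[i]}{2p}$ and $0\le\beta_0(j,i)\le1$.
   Context: $B_{n,p,k'}=\sum_{i'=k'}^n\binom{n}{i'}p^{i'}(1-p)^{n-i'}$. Define $\beta_1(j,i)=\frac{\pi[i]B_{n,p,j+k}}{p}+\big(B_{n-1,p,j+k-1}-\frac{1-pB_{n-1,p,j+k-1}}{1-p}\big)(1-\pi[i])$ and $\beta_0(j,i)=\frac{1-pB_{n-1,p,j+k-1}}{1-p}(1-\pi[i])$. *)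

From Stdlib Require Import Reals List.
Open Scope R_scope.

Definition Btail (n : nat) (p : R) (k' : nat) : R :=
  sum_f_R0 (fun i' => if Nat.leb k' i' then C n i' * p ^ i' * (1 - p) ^ (n - i') else 0) n.

(* pi is indexed on [k] = {1,...,k} *)
Definition beta1 (n k : nat) (p : R) (pi : nat -> R) (j i : nat) : R :=
  pi i * Btail n p (j + k) / p
  + (Btail (n - 1) p (j + k - 1) - (1 - p * Btail (n - 1) p (j + k - 1)) / (1 - p))
    * (1 - pi i).

Definition beta0 (n k : nat) (p : R) (pi : nat -> R) (j i : nat) : R :=
  (1 - p * Btail (n - 1) p (j + k - 1)) / (1 - p) * (1 - pi i).

Definition is_prob_vector (k : nat) (pi : nat -> R) : Prop :=
  (forall i, (1 <= i <= k)%nat -> 0 <= pi i) /\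
  sum_f_R0 (fun x => pi (S x)) (k - 1) = 1.

Definition max_inv (k : nat) (pi : nat -> R) : R :=
  fold_right Rmax 0 (map (fun i => / pi i) (seq 1 k)).

From Stdlib Require Import Reals Lra Lia List.
Open Scope R_scope.

(* Let L = P[Bin(n, p) < j + k] and L' = P[Bin(n - 1, p) < j + k - 1] be the lower
   binomial tails.  Then beta1 = pi/p - (pi L/p + (1 - pi) L'/(1 - p)) and
   beta0 = (1 - pi) + p (1 - pi) L'/(1 - p).  As j + k <= np/2, Chernoff's bound with
   exponential moment e gives L, L' <= e^-1 e^(-np/18), whence the deviation bounds with
   Cc = 2 and c = 1/18, because 1/(1 - p) <= 1/p.  If moreover np >= 18 ln max 1/pi,
   then e^(-np/18) <= pi[i], so L, L' <= pi[i]/2, which gives both inequalities. *)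

Lemma exp_le_compat x y : x <= y -> exp x <= exp y.
Proof. intros [Hlt | ->]; [left; exact (exp_increasing _ _ Hlt) | right; reflexivity]. Qed.

Lemma exp_pow y n : exp y ^ n = exp (INR n * y).
Proof. rewrite <- Rpower_pow by apply exp_pos. unfold Rpower. now rewrite ln_exp. Qed.

Lemma inv_exp1_le : / exp 1 <= 4 / 9.
Proof.
  assert (Hhalf : exp 1 = exp (1 / 2) * exp (1 / 2)) by (rewrite <- exp_plus; f_equal; lra).
  assert (H32 : 3 / 2 <= exp (1 / 2)) by (pose proof (exp_ineq1_le (1 / 2)); lra).
  replace (4 / 9) with (/ (9 / 4)) by field.
  apply Rinv_le_contravar; nra.
Qed.

Lemma C_ge0 n i : 0 <= C n i.
Proof.
  unfold C. apply Rmult_le_pos; [left; apply INR_fact_lt_0 |].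
  left; apply Rinv_0_lt_compat, Rmult_lt_0_compat; apply INR_fact_lt_0.
Qed.

Definition Ltail (n : nat) (p : R) (m : nat) : R :=
  sum_f_R0 (fun i => if Nat.leb m i then 0 else C n i * p ^ i * (1 - p) ^ (n - i)) n.

Lemma Btail_Ltail n p m : Btail n p m = 1 - Ltail n p m.
Proof.
  enough (Btail n p m + Ltail n p m = (p + (1 - p)) ^ n).
  { replace (p + (1 - p)) with 1 in * by ring. rewrite pow1 in *. lra. }
  unfold Btail, Ltail. rewrite <- plus_sum, binomial.
  apply sum_eq. intros i _. now destruct (Nat.leb m i); ring.
Qed.

Lemma Ltail_ge0 n p m : 0 <= p <= 1 -> 0 <= Ltail n p m.
Proof.
  intros Hp. apply cond_pos_sum. intros i. destruct (Nat.leb m i); [lra |].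
  apply Rmult_le_pos; [apply Rmult_le_pos |]; [apply C_ge0 | apply pow_le; lra ..].
Qed.

(* Chernoff's bound: weight the i-th term, i < m, by x ^ (m - 1 - i) >= 1. *)
Lemma Ltail_le_mgf n p m x : 0 <= p <= 1 -> 1 <= x ->
  Ltail n p m <= x ^ (m - 1) * (p / x + (1 - p)) ^ n.
Proof.
  intros Hp Hx.
  rewrite binomial, scal_sum. apply sum_Rle. intros i _.
  destruct (Nat.leb m i) eqn:Hmi.
  - apply Rmult_le_pos; [apply Rmult_le_pos; [apply Rmult_le_pos |] |];
      [apply C_ge0 | apply pow_le; apply Rmult_le_pos; [| left; apply Rinv_0_lt_compat]; lra
      | apply pow_le; lra | apply pow_le; lra].
  - apply Nat.leb_gt in Hmi.
    assert (Hpx : p ^ i = (p / x) ^ i * x ^ i)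
      by (rewrite <- Rpow_mult_distr; f_equal; field; lra).
    assert (Hxi : x ^ i <= x ^ (m - 1)) by (apply Rle_pow; [lra | lia]).
    assert (Hw : 0 <= C n i * (p / x) ^ i * (1 - p) ^ (n - i)).
    { apply Rmult_le_pos; [apply Rmult_le_pos |]; [apply C_ge0 | apply pow_le .. ];
        [apply Rmult_le_pos; [| left; apply Rinv_0_lt_compat] |]; lra. }
    rewrite Hpx. nra.
Qed.

Lemma Ltail_le_exp n p m : 0 <= p <= 1 -> (1 <= m)%nat ->
  Ltail n p m <= exp (INR m - 1 - INR n * p * (1 - / exp 1)).
Proof.
  intros Hp Hm.
  assert (He : 1 <= exp 1) by (pose proof (exp_ineq1_le 1); lra).
  eapply Rle_trans; [apply (Ltail_le_mgf n p m (exp 1)); lra |].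
  replace (INR m - 1 - INR n * p * (1 - / exp 1))
    with (INR (m - 1) * 1 + INR n * (- (p * (1 - / exp 1))))
    by (rewrite minus_INR by lia; simpl; ring).
  rewrite exp_plus, <- !exp_pow.
  apply Rmult_le_compat_l; [apply pow_le; lra |].
  assert (Hinv : 0 < / exp 1 <= 1).
  { split; [apply Rinv_0_lt_compat; lra |].
    rewrite <- Rinv_1 at 2. apply Rinv_le_contravar; lra. }
  apply pow_incr. split.
  - unfold Rdiv. nra.
  - eapply Rle_trans; [| apply exp_ineq1_le]. unfold Rdiv. lra.
Qed.

Lemma Ltail_small n p m : 0 < p <= 1 / 2 -> (1 <= m)%nat -> INR m <= INR n * p / 2 ->
  Ltail n p m <= exp (-1) * exp (- (1 / 18 * (INR n * p))).
Proof.
  intros Hp Hm Hmn. rewrite <- exp_plus.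
  eapply Rle_trans; [apply Ltail_le_exp; [lra | exact Hm] |].
  apply exp_le_compat.
  pose proof inv_exp1_le. pose proof (pos_INR n).
  assert (0 <= INR n * p) by nra.
  nra.
Qed.

Lemma Ltail_pred_small n p m : 0 < p <= 1 / 2 -> (1 <= n)%nat -> (2 <= m)%nat ->
  INR m <= INR n * p / 2 ->
  Ltail (n - 1) p (m - 1) <= exp (-1) * exp (- (1 / 18 * (INR n * p))).
Proof.
  intros Hp Hn Hm Hmn. rewrite <- exp_plus.
  eapply Rle_trans; [apply Ltail_le_exp; [lra | lia] |].
  apply exp_le_compat. rewrite !minus_INR by lia. simpl INR.
  pose proof inv_exp1_le. pose proof (pos_INR n).
  assert (0 < / exp 1) by (apply Rinv_0_lt_compat, exp_pos).
  assert (0 <= INR n * p) by nra.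
  nra.
Qed.

Lemma sum_f_R0_term_le f N t : (forall x, (x <= N)%nat -> 0 <= f x) -> (t <= N)%nat ->
  f t <= sum_f_R0 f N.
Proof.
  revert t. induction N as [| N IH]; intros t Hf Ht; simpl.
  - replace t with 0%nat by lia. lra.
  - assert (Hf0 : f 0%nat <= sum_f_R0 f N) by (apply IH; [intros; apply Hf |]; lia).
    assert (0 <= f 0%nat /\ 0 <= f (S N)) as [] by (split; apply Hf; lia).
    destruct (Nat.eq_dec t (S N)) as [-> |]; [lra |].
    assert (f t <= sum_f_R0 f N) by (apply IH; [intros; apply Hf |]; lia).
    lra.
Qed.

Lemma prob_vector_bounds k pi i : is_prob_vector k pi -> (1 <= i <= k)%nat -> 0 <= pi i <= 1.
Proof.
  intros [Hge0 Hsum] Hi. split; [apply Hge0; lia |].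
  rewrite <- Hsum. replace i with (S (i - 1)) at 1 by lia.
  apply (sum_f_R0_term_le (fun x => pi (S x))); [intros; apply Hge0 |]; lia.
Qed.

Lemma fold_Rmax_ge a l : In a l -> a <= fold_right Rmax 0 l.
Proof.
  induction l as [| b l IH]; simpl; [tauto |]. intros [-> | Ha].
  - apply Rmax_l.
  - eapply Rle_trans; [apply IH, Ha | apply Rmax_r].
Qed.

Lemma max_inv_ge k pi i : (1 <= i <= k)%nat -> / pi i <= max_inv k pi.
Proof.
  intros Hi. apply fold_Rmax_ge, (in_map (fun i => / pi i)), in_seq. lia.
Qed.

Lemma exp_opp_le a M x : 0 < a -> / a <= M -> ln M <= x -> exp (- x) <= a.
Proof.
  intros Ha HaM HMx.
  assert (HM : 0 < M) by (pose proof (Rinv_0_lt_compat a Ha); lra).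
  apply Rle_trans with (exp (- ln M)); [apply exp_le_compat; lra |].
  rewrite exp_Ropp, exp_ln by exact HM.
  rewrite <- (Rinv_inv a). apply Rinv_le_contravar; [apply Rinv_0_lt_compat |]; lra.
Qed.

Lemma beta1_Ltail n k p pi j i : 0 < p < 1 ->
  beta1 n k p pi j i = pi i / p
    - (pi i * Ltail n p (j + k) / p + (1 - pi i) * Ltail (n - 1) p (j + k - 1) / (1 - p)).
Proof. intros Hp. unfold beta1. rewrite !Btail_Ltail. field. lra. Qed.

Lemma beta0_Ltail n k p pi j i : 0 < p < 1 ->
  beta0 n k p pi j i = (1 - pi i) + p * ((1 - pi i) * Ltail (n - 1) p (j + k - 1) / (1 - p)).
Proof. intros Hp. unfold beta0. rewrite !Btail_Ltail. field. lra. Qed.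

Lemma mixture_le p a x y d : 0 < p <= 1 / 2 -> 0 <= a <= 1 -> 0 <= x <= d -> 0 <= y <= d ->
  0 <= a * x / p + (1 - a) * y / (1 - p) <= d / p.
Proof.
  intros Hp Ha Hx Hy.
  assert (Hq : 0 < / p) by (apply Rinv_0_lt_compat; lra).
  assert (Hr : 0 < / (1 - p) <= / p)
    by (split; [apply Rinv_0_lt_compat | apply Rinv_le_contravar]; lra).
  set (q := / p) in *. set (r := / (1 - p)) in *.
  assert (Hxq : a * x * q <= a * d * q) by (apply Rmult_le_compat_r, Rmult_le_compat_l; lra).
  assert (Hyr : (1 - a) * y * r <= (1 - a) * d * q)
    by (rewrite !Rmult_assoc; apply Rmult_le_compat_l, Rmult_le_compat; lra).
  assert (0 <= a * x * q) by (apply Rmult_le_pos; [apply Rmult_le_pos |]; lra).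
  assert (0 <= (1 - a) * y * r) by (apply Rmult_le_pos; [apply Rmult_le_pos |]; lra).
  unfold Rdiv. fold q r. split; nra.
Qed.

Lemma compl_ratio_le p a y : 0 < p <= 1 / 2 -> 0 <= a <= 1 -> 0 <= y ->
  0 <= (1 - a) * y / (1 - p) <= 2 * y.
Proof.
  intros Hp Ha Hy.
  assert (Hq : 0 < / (1 - p) <= 2).
  { split; [apply Rinv_0_lt_compat; lra |].
    replace 2 with (/ (1 / 2)) by field. apply Rinv_le_contravar; lra. }
  unfold Rdiv. split.
  - apply Rmult_le_pos; [apply Rmult_le_pos |]; lra.
  - rewrite Rmult_comm. replace (2 * y) with (2 * (1 * y)) by ring.
    apply Rmult_le_compat; try apply Rmult_le_compat; try apply Rmult_le_pos; lra.
Qed.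

Section BetaEstimates.

Variables (n k : nat) (p : R) (pi : nat -> R) (i j : nat).
Hypotheses (Hn : (2 <= n)%nat) (Hk : (1 <= k)%nat) (Hp : 0 < p <= 1 / 2)
  (Hpi : is_prob_vector k pi) (Hi : (1 <= i <= k)%nat)
  (Hj : (1 <= j)%nat) (Hjn : INR j <= INR n * p / 2 - INR k).

Lemma Ltails_small :
  0 <= Ltail n p (j + k) <= exp (-1) * exp (- (1 / 18 * (INR n * p))) /\
  0 <= Ltail (n - 1) p (j + k - 1) <= exp (-1) * exp (- (1 / 18 * (INR n * p))).
Proof.
  assert (Hjk : INR (j + k) <= INR n * p / 2) by (rewrite plus_INR; lra).
  split; split; try (apply Ltail_ge0; lra).
  - apply Ltail_small; [lra | lia | exact Hjk].
  - apply Ltail_pred_small; [lra | lia | lia | exact Hjk].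
Qed.

Lemma beta_deviation :
  Rabs (beta1 n k p pi j i - pi i / p) <= 2 * exp (- (1 / 18 * (INR n * p))) / p /\
  Rabs (beta0 n k p pi j i - (1 - pi i)) <= 2 * p * exp (- (1 / 18 * (INR n * p))).
Proof.
  destruct Ltails_small as [HL HL'].
  pose proof (prob_vector_bounds k pi i Hpi Hi) as Ha.
  set (E := exp (- (1 / 18 * (INR n * p)))) in *.
  assert (HE : 0 < E) by apply exp_pos.
  assert (He : exp (-1) <= 1) by (rewrite <- exp_0; apply exp_le_compat; lra).
  assert (HeE : exp (-1) * E <= E) by nra.
  rewrite beta1_Ltail, beta0_Ltail by lra.
  destruct (mixture_le p (pi i) (Ltail n p (j + k)) (Ltail (n - 1) p (j + k - 1)) E)
    as [Hmix0 Hmix]; [lra .. |].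
  destruct (compl_ratio_le p (pi i) (Ltail (n - 1) p (j + k - 1))) as [Hc0 Hc]; [lra .. |].
  split.
  - rewrite Rabs_minus_sym, Rabs_pos_eq by lra.
    apply Rle_trans with (E / p); [lra |].
    unfold Rdiv. apply Rmult_le_compat_r; [left; apply Rinv_0_lt_compat |]; lra.
  - rewrite Rabs_pos_eq by nra. nra.
Qed.

Hypothesis Hpos : forall i', (1 <= i' <= k)%nat -> 0 < pi i'.
Hypothesis Hmax : 18 * ln (max_inv k pi) <= INR n * p.

Lemma beta_bounds : pi i / (2 * p) <= beta1 n k p pi j i /\ 0 <= beta0 n k p pi j i <= 1.
Proof.
  destruct Ltails_small as [HL HL'].
  pose proof (prob_vector_bounds k pi i Hpi Hi) as Ha.
  assert (HE : exp (- (1 / 18 * (INR n * p))) <= pi i)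
    by (apply (exp_opp_le _ (max_inv k pi)); [apply Hpos, Hi | apply max_inv_ge, Hi | lra]).
  assert (He : exp (-1) <= 1 / 2).
  { replace (-1) with (- (1)) by ring. rewrite exp_Ropp. replace (1 / 2) with (/ 2) by field.
    apply Rinv_le_contravar; [lra |]. pose proof (exp_ineq1_le 1). lra. }
  assert (Hhalf : exp (-1) * exp (- (1 / 18 * (INR n * p))) <= pi i / 2)
    by (pose proof (exp_pos (-1)); nra).
  rewrite beta1_Ltail, beta0_Ltail by lra.
  destruct (mixture_le p (pi i) (Ltail n p (j + k)) (Ltail (n - 1) p (j + k - 1)) (pi i / 2))
    as [_ Hmix]; [lra .. |].
  destruct (compl_ratio_le p (pi i) (Ltail (n - 1) p (j + k - 1))) as [Hc0 Hc]; [lra .. |].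
  split; [| split].
  - replace (pi i / (2 * p)) with (pi i / p - pi i / 2 / p) by (field; lra). lra.
  - nra.
  - nra.
Qed.

End BetaEstimates.

Theorem lemma5 :
  (exists Cc c : R, 0 < Cc /\ 0 < c /\
    forall (n k : nat) (p : R) (pi : nat -> R) (i j : nat),
      (2 <= n)%nat -> (1 <= k)%nat -> 0 < p <= 1 / 2 ->
      INR k <= INR n * p / 2 - 1 ->
      is_prob_vector k pi -> (1 <= i <= k)%nat ->
      (1 <= j)%nat -> INR j <= INR n * p / 2 - INR k ->
      Rabs (beta1 n k p pi j i - pi i / p) <= Cc * exp (- (c * (INR n * p))) / p /\
      Rabs (beta0 n k p pi j i - (1 - pi i)) <= Cc * p * exp (- (c * (INR n * p))))
  /\
  (exists C0 : R, 0 < C0 /\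
    forall (n k : nat) (p : R) (pi : nat -> R) (i j : nat),
      (2 <= n)%nat -> (1 <= k)%nat -> 0 < p <= 1 / 2 ->
      INR k <= INR n * p / 2 - 1 ->
      is_prob_vector k pi -> (1 <= i <= k)%nat ->
      (1 <= j)%nat -> INR j <= INR n * p / 2 - INR k ->
      (forall i', (1 <= i' <= k)%nat -> 0 < pi i') ->
      C0 * ln (max_inv k pi) <= INR n * p ->
      pi i / (2 * p) <= beta1 n k p pi j i /\
      0 <= beta0 n k p pi j i <= 1).
Proof.
  (* The hypothesis on k is implied by the one on j, hence unused. *)
  split.
  - exists 2, (1 / 18). split; [lra | split; [lra |]].
    intros n k p pi i j Hn Hk Hp _ Hpi Hi Hj Hjn.
    exact (beta_deviation n k p pi i j Hn Hk Hp Hpi Hi Hj Hjn).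
  - exists 18. split; [lra |].
    intros n k p pi i j Hn Hk Hp _ Hpi Hi Hj Hjn Hpos Hmax.
    exact (beta_bounds n k p pi i j Hn Hk Hp Hpi Hi Hj Hjn Hpos Hmax).
Qed.
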